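(* For every $n\ge1$, $4Q_n(x/2)$ is divisible by $(x-2)^2$; writing $4Q_n(x/2)=(x-2)^2R_n(x)$ with $R_n$ a polynomial, one has the factorization \[ \Phi_n(x)=\tilde U^{\mathrm e}_n(x)\cdot 4Q_n\Big(\frac x2\Big)=(x-2)^2\cdot\tilde U^{\mathrm e}_n(x)\cdot R_n(x). \]
   Context: $U_n$ is the Chebyshev polynomial of the second kind, $U_n(\cos\theta)=\sin((n+1)\theta)/\sin\theta$, extended by $U_{-1}=0$, $U_{-2}=-1$; $\tilde U_n(x)=U_n(x/2)$, and $\Phi_n(x)=((n+1)x^2-6x-4n)\tilde U_n(x)+2(x+2)\tilde U_{n-1}(x)+2(x+2)$. $U^{\mathrm e}_n$ is defined by $U^{\mathrm e}_n(\cos\theta)=\frac{\sin((n+1)\theta/2)}{\sin(\theta/2)}$ for $n$ even and $\frac{\sin((n+1)\theta/2)}{\sin\theta}$ for $n$ odd, and $\tilde U^{\mathrm e}_n(x)=U^{\mathrm e}_n(x/2)$. For $k\ge1$, $Q_{2k}(x)=((2k+1)x^2-3x-2k)(U_k(x)-U_{k-1}(x))+(x+1)(U_{k-1}(x)-U_{k-2}(x))$, and for $k\ge0$, $Q_{2k+1}(x)=((2k+2)x^2-3x-2k-1)(U_{k+1}(x)-U_{k-1}(x))+(x+1)(U_k(x)-U_{k-2}(x))$. *)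

From HB Require Import structures.
From mathcomp Require Import all_boot all_order all_algebra.
Set Implicit Arguments. Unset Strict Implicit. Unset Printing Implicit Defensive.
Import Order.TTheory GRing.Theory Num.Theory.
Local Open Scope ring_scope.

(* Chebyshev polynomials of the second kind U_m, m : nat,
   U_0 = 1, U_1 = 2X, U_{m+2} = 2X U_{m+1} - U_m
   (equivalently U_m(cos t) = sin((m+1)t)/sin t). *)
Fixpoint chebU_pair (R : ringType) (m : nat) : {poly R} * {poly R} :=
  match m with
  | 0%N => (1, 2%:R *: 'X)
  | m'.+1 => let: (a, b) := chebU_pair R m' in (b, 2%:R *: 'X * b - a)
  end.

Definition chebUn (R : ringType) (m : nat) : {poly R} := (chebU_pair R m).1.

(* Integer-indexed extension: U_{-1} = 0, U_{-2} = -1, and in general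
   U_{-m-2} = - U_m (the extension by the three-term recurrence). *)
Definition chebU (R : ringType) (i : int) : {poly R} :=
  match i with
  | Posz m => chebUn R m
  | Negz 0 => 0                     (* i = -1 *)
  | Negz m.+1 => - chebUn R m       (* i = -(m+2) *)
  end.

Definition half_arg (R : fieldType) (p : {poly R}) : {poly R} :=
  p \Po ((2%:R)^-1 *: 'X).

Definition tU (R : fieldType) (i : int) : {poly R} := half_arg (chebU R i).

(* U^e_n : U^e_n(cos t) = sin((n+1)t/2)/sin(t/2) for n even,
   sin((n+1)t/2)/sin t for n odd.  As polynomials:
   n = 2m   : U^e_n = U_m + U_{m-1}   (sin((2m+1)t/2)/sin(t/2) = 1 + 2 sum_{j<=m} cos(jt))
   n = 2m+1 : U^e_n = U_m. *)
Definition chebUe (R : ringType) (n : nat) : {poly R} :=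
  if odd n then chebU R (n./2)%:Z
  else chebU R (n./2)%:Z + chebU R ((n./2)%:Z - 1).

Definition tUe (R : fieldType) (n : nat) : {poly R} := half_arg (chebUe R n).

Definition Phi (R : fieldType) (n : nat) : {poly R} :=
  ((n.+1)%:R *: 'X^2 - 6%:R *: 'X - (4 * n)%:R%:P) * tU R n%:Z
  + 2%:R *: ('X + 2%:R%:P) * tU R (n%:Z - 1)
  + 2%:R *: ('X + 2%:R%:P).

Definition Qpoly (R : ringType) (n : nat) : {poly R} :=
  let k := n./2 in
  let kz := k%:Z in
  if ~~ odd n then
    ((2 * k + 1)%:R *: 'X^2 - 3%:R *: 'X - (2 * k)%:R%:P)
      * (chebU R kz - chebU R (kz - 1))
    + ('X + 1) * (chebU R (kz - 1) - chebU R (kz - 2))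
  else
    ((2 * k + 2)%:R *: 'X^2 - 3%:R *: 'X - (2 * k + 1)%:R%:P)
      * (chebU R (kz + 1) - chebU R (kz - 1))
    + ('X + 1) * (chebU R kz - chebU R (kz - 2)).

From HB Require Import structures.
From mathcomp Require Import all_boot all_order all_algebra.
From mathcomp Require Import ring zify.
Import Order.TTheory GRing.Theory Num.Theory.
Set Implicit Arguments. Unset Strict Implicit. Unset Printing Implicit Defensive.
Local Open Scope ring_scope.

(* Put V_m = U_{m-2}.  It satisfies V_{m+2} = 2x V_{m+1} - V_m with V_0 = -1,
   V_1 = 0, hence the addition formula V_{a+b+1} = V_{a+1} V_{b+2} - V_a V_{b+1}
   and Cassini's identity V_{m+1}^2 - V_{m+2} V_m = 1.  Rewriting U_n and
   U_{n-1} by the resulting doubling formulas, Phi_n(2x)/4 - U^e_n(x) Q_n(x)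
   collapses to (x + 1)(1 - Cassini) = 0; substituting x/2 for x gives the
   factorization.  Finally V_m(1) = m - 1 and 3 V_m'(1) = (m-2)(m-1)m, which
   make 1 a double root of Q_n, so (x - 2)^2 divides 4 Q_n(x/2). *)

Section ChebyshevRecurrence.
Variables (A : comPzRingType) (x : A).

Definition cheb_rec (u : nat -> A) := forall m, u m.+2 = x * u m.+1 - u m.

Lemma cheb_rec_eq u v : cheb_rec u -> cheb_rec v -> u 0 = v 0 -> u 1 = v 1 -> u =1 v.
Proof.
move=> hu hv h0 h1; suff uv m : u m = v m /\ u m.+1 = v m.+1 by move=> m; case: (uv m).
by elim: m => [|m [IHm IHm1]] //; rewrite hu hv IHm IHm1.
Qed.

Lemma cheb_rec_cassini u : cheb_rec u ->
  forall m, u m.+1 ^+ 2 - u m.+2 * u m = u 1 ^+ 2 - u 2 * u 0.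
Proof. by move=> hu; elim=> // m <-; rewrite (hu m.+1) (hu m); ring. Qed.

Variable u : nat -> A.
Hypotheses (u_rec : cheb_rec u) (u0 : u 0 = -1) (u1 : u 1 = 0).

Lemma cheb_addn a b : u (a + b).+1 = u a.+1 * u b.+2 - u a * u b.+1.
Proof.
have u2 : u 2 = 1 by rewrite u_rec u1 u0; ring.
have u3 : u 3 = x by rewrite u_rec u2 u1; ring.
apply: (@cheb_rec_eq (fun b => u (a + b).+1) (fun b => u a.+1 * u b.+2 - u a * u b.+1)).
- by move=> m; rewrite !addnS u_rec.
- by move=> m; rewrite (u_rec m.+2) (u_rec m.+1); ring.
- by rewrite addn0 u2 u1; ring.
- by rewrite addn1 u3 u2 u_rec; ring.
Qed.

Lemma cheb_cassini m : u m.+1 ^+ 2 - u m.+2 * u m = 1.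
Proof. by rewrite cheb_rec_cassini // u_rec u1 u0; ring. Qed.

Lemma cheb_even k : u k.*2.+2 = (u k.+2 + u k.+1) * (u k.+2 - u k.+1).
Proof. by rewrite -addnn -addSn cheb_addn; ring. Qed.

Lemma cheb_even_alt k : u k.*2.+2 = u k.+2 * (u k.+2 - u k) - 1.
Proof. by rewrite cheb_even -(cheb_cassini k); ring. Qed.

Lemma cheb_odd k : u k.*2.+3 = u k.+2 * (u k.+3 - u k.+1).
Proof. by rewrite -addnn -addSn -addnS cheb_addn; ring. Qed.

Lemma cheb_odd_alt k : u k.*2.+1 = (u k.+2 + u k.+1) * (u k.+1 - u k) - 1.
Proof. by rewrite -addnn cheb_addn -(cheb_cassini k); ring. Qed.

End ChebyshevRecurrence.

Section ChebyshevPoly.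
Variable R : comNzRingType.

Lemma chebUnSS m : chebUn R m.+2 = 2%:R *: 'X * chebUn R m.+1 - chebUn R m.
Proof. by rewrite /chebUn /=; case: (chebU_pair R m). Qed.

(* [chebV m] is U_{m-2}: the shift turns the indices -2, -1 into 0, 1. *)
Definition chebV m := chebU R (m%:Z - 2).

Lemma chebV0 : chebV 0 = -1. Proof. by []. Qed.
Lemma chebV1 : chebV 1 = 0. Proof. by []. Qed.

Lemma chebVSS m : chebV m.+2 = chebUn R m.
Proof. by rewrite /chebV -addn2 PoszD addrK. Qed.

Lemma chebV_rec : cheb_rec (2%:R * 'X) chebV.
Proof.
case=> [|[|m]]; rewrite ?chebVSS ?chebV0 ?chebV1.
- by rewrite mulr0 sub0r opprK.
- by rewrite mulr1 subr0 mulr_natl -scaler_nat.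
- by rewrite chebUnSS scaler_nat mulr_natl.
Qed.

Lemma chebU_subn2 m : chebU R (m%:Z - 2) = chebV m. Proof. by []. Qed.

Lemma chebU_subn1 m : chebU R (m%:Z - 1) = chebV m.+1.
Proof. by rewrite /chebV; congr chebU; lia. Qed.

Lemma chebU_nat m : chebU R m%:Z = chebV m.+2.
Proof. by rewrite /chebV; congr chebU; lia. Qed.

Lemma chebU_addn1 m : chebU R (m%:Z + 1) = chebV m.+3.
Proof. by rewrite /chebV; congr chebU; lia. Qed.

(* [Psi n] is Phi_n(2x)/4, which involves no halving. *)
Definition Psi n := ((n.+1)%:R *: 'X^2 - 3%:R *: 'X - n%:R%:P) * chebU R n%:Z
  + ('X + 1) * chebU R (n%:Z - 1) + ('X + 1).

Lemma chebUe_Qpoly_odd k : chebUe R k.*2.+1 * Qpoly R k.*2.+1 = Psi k.*2.+1.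
Proof.
rewrite /chebUe /Qpoly /Psi (half_bit_double k true).
rewrite !chebU_subn2 !chebU_subn1 !chebU_addn1 !chebU_nat !scaler_nat !polyC_natr.
rewrite oddS odd_double /= (cheb_odd chebV_rec chebV0 chebV1).
by rewrite (cheb_even_alt chebV_rec chebV0 chebV1) -!mul2n; ring.
Qed.

Lemma chebUe_Qpoly_even k : chebUe R k.*2 * Qpoly R k.*2 = Psi k.*2.
Proof.
rewrite /chebUe /Qpoly /Psi (half_bit_double k false).
rewrite !chebU_subn2 !chebU_subn1 !chebU_nat !scaler_nat !polyC_natr.
rewrite odd_double /= (cheb_even chebV_rec chebV0 chebV1).
by rewrite (cheb_odd_alt chebV_rec chebV0 chebV1) -!mul2n; ring.
Qed.

Lemma chebUe_Qpoly n : chebUe R n * Qpoly R n = Psi n.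
Proof.
rewrite -(odd_double_half n); move: (odd n) (n./2) => [] k.
- exact: chebUe_Qpoly_odd.
- exact: chebUe_Qpoly_even.
Qed.

End ChebyshevPoly.

Section HalfArgument.
Variable R : fieldType.
Hypothesis two_neq0 : 2%:R != 0 :> R.

Lemma X_double_half : 'X = 2%:R * (2%:R^-1 *: 'X) :> {poly R}.
Proof. by rewrite mulr_natl -scaler_nat scalerA (mulfV two_neq0) scale1r. Qed.

Lemma Phi_Psi n : Phi R n = 4%:R *: half_arg (Psi R n).
Proof.
rewrite /Phi /Psi -!mul_polyC !polyC_natr /tU /half_arg.
rewrite !(rmorph_nat (comp_poly _), rmorph1 (comp_poly _), comp_polyB, comp_polyD, comp_polyM).
rewrite comp_polyX.
by move: (2%:R^-1 *: 'X) X_double_half => y ->; ring.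
Qed.

Lemma Phi_factor n : Phi R n = tUe R n * (4%:R *: half_arg (Qpoly R n)).
Proof. by rewrite Phi_Psi -chebUe_Qpoly /tUe /half_arg comp_polyM scalerAr. Qed.

Lemma half_arg_Xsub1_sqr (p : {poly R}) :
  4%:R *: half_arg (('X - 1) ^+ 2 * p) = ('X - 2%:R%:P) ^+ 2 * half_arg p.
Proof.
rewrite /half_arg expr2 !comp_polyM comp_polyB (rmorph1 (comp_poly _)) comp_polyX.
rewrite polyC_natr -mul_polyC polyC_natr.
by move: (2%:R^-1 *: 'X) X_double_half => y ->; ring.
Qed.

End HalfArgument.

Section ValuesAtOne.
Variable R : comNzRingType.

Lemma cheb_rec_horner (x : {poly R}) u c :
  cheb_rec x u -> cheb_rec x.[c] (fun m => (u m).[c]).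
Proof. by move=> hu m; rewrite hu hornerD hornerN hornerM. Qed.

Lemma chebV_at1 m : (chebV R m).[1] = m%:R - 1.
Proof.
have pred_rec : cheb_rec (2%:R * 'X : {poly R}).[1] (fun k => k%:R - 1).
  by move=> k; rewrite !hornerE; ring.
apply: (cheb_rec_eq (cheb_rec_horner 1 (chebV_rec R)) pred_rec) => /=.
- by rewrite chebV0 hornerN hornerC; ring.
- by rewrite chebV1 horner0; ring.
Qed.

Lemma chebV_deriv_rec m : (chebV R m.+2)^`() =
  2%:R * chebV R m.+1 + 2%:R * 'X * (chebV R m.+1)^`() - (chebV R m)^`().
Proof. by rewrite chebV_rec derivB !derivM derivX -polyC_natr derivC; ring. Qed.

Lemma chebV_deriv_at1 m :
  3%:R * (chebV R m)^`().[1] = (m%:R - 2) * (m%:R - 1) * m%:R.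
Proof.
pose g k := 3%:R * (chebV R k)^`().[1] - (k%:R - 2) * (k%:R - 1) * k%:R.
have g_rec : cheb_rec 2%:R g.
  by move=> k; rewrite /g chebV_deriv_rec !hornerE chebV_at1; ring.
have zero_rec : cheb_rec (2%:R : R) (fun=> 0) by move=> k; ring.
have g0 : g 0 = 0 by rewrite /g chebV0 derivN -polyC1 derivC !hornerE; ring.
have g1 : g 1 = 0 by rewrite /g chebV1 deriv0 horner0; ring.
by move/eqP: (cheb_rec_eq g_rec zero_rec g0 g1 m); rewrite subr_eq0 => /eqP.
Qed.

Lemma Qpoly_at1 n : (Qpoly R n).[1] = 0.
Proof.
rewrite /Qpoly; case: ifP => _;
  rewrite !chebU_subn2 !chebU_subn1 ?chebU_addn1 !chebU_nat;
  by rewrite !(hornerD, hornerN, hornerM, hornerZ, hornerXn, hornerX, hornerC) !chebV_at1; ring.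
Qed.

End ValuesAtOne.

Lemma root_deriv_factor (R : comNzRingType) (p : {poly R}) (a : R) :
  p.[a] = 0 -> p^`().[a] = 0 -> exists q, p = ('X - a%:P) ^+ 2 * q.
Proof.
move=> pa; have /factor_theorem [q ->] : root p a by apply/eqP.
rewrite derivM derivXsubC !hornerE subrr mulr0 add0r => qa.
have /factor_theorem [r ->] : root q a by apply/eqP.
by exists r; ring.
Qed.

Section DoubleRootAtOne.
Variable R : fieldType.
Hypothesis three_neq0 : 3%:R != 0 :> R.

Lemma Qpoly_deriv_at1 n : (Qpoly R n)^`().[1] = 0.
Proof.
have e1 m : (chebV R m)^`().[1] = (m%:R - 2) * (m%:R - 1) * m%:R / 3%:R.
  by rewrite -chebV_deriv_at1 mulrC mulKf.
rewrite /Qpoly; case: ifP => _;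
  rewrite !chebU_subn2 !chebU_subn1 ?chebU_addn1 !chebU_nat;
  rewrite !(derivD, derivN, derivM, derivZ, derivXn, derivX, derivC);
  rewrite !(hornerD, hornerN, hornerM, hornerZ, hornerXn, hornerX, hornerC) !chebV_at1 !e1;
  by field; exact: three_neq0.
Qed.

Lemma Qpoly_factor n : exists S, Qpoly R n = ('X - 1) ^+ 2 * S.
Proof.
by rewrite -polyC1; apply: root_deriv_factor; [apply: Qpoly_at1 | apply: Qpoly_deriv_at1].
Qed.

End DoubleRootAtOne.

Theorem theoremB7 (R : numFieldType) (n : nat) (hn : (1 <= n)%N) :
  exists Rn : {poly R},
    4%:R *: half_arg (Qpoly R n) = ('X - 2%:R%:P) ^+ 2 * Rn /\
    Phi R n = tUe R n * (4%:R *: half_arg (Qpoly R n)) /\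
    Phi R n = ('X - 2%:R%:P) ^+ 2 * tUe R n * Rn.
Proof.
(* The factorization also holds for n = 0. *)
have two_neq0 : 2%:R != 0 :> R by rewrite pnatr_eq0.
have three_neq0 : 3%:R != 0 :> R by rewrite pnatr_eq0.
have [S QS] := Qpoly_factor three_neq0 n.
have QR : 4%:R *: half_arg (Qpoly R n) = ('X - 2%:R%:P) ^+ 2 * half_arg S.
  by rewrite QS half_arg_Xsub1_sqr.
exists (half_arg S); split=> //; split; first exact: Phi_factor.
by rewrite Phi_factor // QR mulrCA mulrA.
Qed.
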